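(* Let $G$ be a finite group and let $H$ be a generalized quaternion $2$-subgroup of $G$. Then $H$ is a perfect code of $G$ if and only if $H$ is a maximal generalized quaternion subgroup of $G$ (i.e., maximal with respect to inclusion among the generalized quaternion subgroups of $G$).
   Context: For a group $G$ with identity $e$ and an inverse-closed subset $S\subseteq G\setminus\{e\}$, the Cayley graph $\mathrm{Cay}(G,S)$ has vertex set $G$ and edges $\{g,sg\}$ for $s\in S$, $g\in G$. A perfect code in a graph is an independent set $C$ of vertices such that every vertex outside $C$ is adjacent to exactly one vertex of $C$. A subgroup $H$ of $G$ is a perfect code of $G$ if some Cayley graph of $G$ admits $H$ as a perfect code. *)

From HB Require Import structures.
From mathcomp Require Import all_boot all_fingroup all_solvable.
Set Implicit Arguments. Unset Strict Implicit. Unset Printing Implicit Defensive.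
Local Open Scope group_scope.

(* Cayley graph Cay(G,S) on vertex set G: g and s*g are adjacent for s in S,
   i.e. g ~ h iff h * g^-1 \in S. *)
Definition cayley_adj (gT : finGroupType) (S : {set gT}) (g h : gT) : bool :=
  h * g^-1 \in S.

Definition perfect_code_in (gT : finGroupType) (G : {set gT}) (S C : {set gT}) : Prop :=
  [/\ C \subset G,
      (forall c1 c2, c1 \in C -> c2 \in C -> c1 != c2 -> ~~ cayley_adj S c1 c2)
    & (forall g, g \in G -> g \notin C ->
         #|[set c in C | cayley_adj S g c]| = 1%N)].

Definition subgroup_perfect_code (gT : finGroupType) (G H : {set gT}) : Prop :=
  exists S : {set gT}, [/\ S \subset G :\ 1, S^-1 = S & perfect_code_in G S H].

Definition gen_quaternion (gT : finGroupType) (H : {set gT}) : Prop :=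
  exists2 n, (2 < n)%N & H \isog 'Q_(2 ^ n).

Definition max_gen_quaternion (gT : finGroupType) (G H : {group gT}) : Prop :=
  [/\ H \subset G, gen_quaternion H &
      forall K : {group gT}, K \subset G -> gen_quaternion K -> H \subset K -> K = H].

From mathcomp Require Import all_boot all_fingroup all_solvable.
Set Implicit Arguments. Unset Strict Implicit. Unset Printing Implicit Defensive.
Local Open Scope group_scope.

(* A perfect code H of G amounts to an inverse-closed set S meeting every right coset
   H y, y \notin H, exactly once.
   If H < K <= G with K generalized quaternion, S :&: K does this for the cosets of H in K,
   so it has #|K : H| - 1 elements, an odd number; but it is inverse-closed without
   involutions, since the unique involution of K already lies in H, so it has even size.
   Conversely S is built one double coset D = H g H at a time: any right coset in D can be
   matched with any right coset in D^-1 by a pair s, s^-1, so only a self-inverse D with an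
   odd number #|H : H :&: H :^ g| of right cosets needs a coset containing an involution.
   For a maximal H that number is a power of 2, hence 1, so g normalises H and g^2 \in H;
   if H g contained no involution, H <*> <[g]> = H :|: H :* g would have the same
   involutions as H and be a larger generalized quaternion group. *)

Lemma expg2_eq1 (gT : finGroupType) (x : gT) : (x ^+ 2 == 1) = (x^-1 == x).
Proof. by rewrite expgS expg1 -eq_invg_mul. Qed.

Lemma even_card_invg_closed (gT : finGroupType) (A : {set gT}) :
  A^-1 = A -> {in A, forall a, a^-1 != a} -> ~~ odd #|A|.
Proof.
have [n] := ubnP #|A|; elim: n A => // n IHn A ltAn AV nfixA.
have [-> | [a Aa]] := set_0Vmem A; first by rewrite cards0.
set P := [set a; a^-1].
have sPA : P \subset A by rewrite subUset !sub1set Aa -AV mem_invg invgK.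
have cardP : #|P| = 2%N by rewrite cards2 eq_sym nfixA.
have PV : P^-1 = P by rewrite invUg !invg_set1 invgK setUC.
have cardA : #|A| = (#|A :\: P| + 2)%N by rewrite cardsDS // -cardP subnK ?subset_leq_card.
rewrite cardA addn2 /= negbK; apply: IHn.
- by move: ltAn; rewrite cardA addn2 ltnS => /ltnW.
- by rewrite invDg AV PV.
by move=> x /setDP[Ax _]; apply: nfixA.
Qed.

Lemma disjoint_setDl (T : finType) (A B : {set T}) : [disjoint A :\: B & B].
Proof. by rewrite -setI_eq0 setIDAC setDIl setDv setI0. Qed.

Section InverseClosedTransversal.

Variables (gT : finGroupType) (H : {group gT}).
Implicit Types (g s t x y z : gT) (Y S : {set gT}).

Definition rcoset_closed Y := {in Y, forall y, H :* y \subset Y}.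

Definition inv_transversal Y S :=
  [/\ S \subset Y, S^-1 = S & {in Y, forall y, #|S :&: H :* y| = 1%N}].

Lemma rcoset_closed_mem Y y z :
  rcoset_closed Y -> z \in H :* y -> (z \in Y) = (y \in Y).
Proof.
move=> clY zHy; apply/idP/idP => [Yz | Yy]; last exact: (subsetP (clY y Yy)).
by apply: (subsetP (clY z Yz)); rewrite (rcoset_eqP zHy) rcoset_refl.
Qed.

Lemma rcoset_closedD Y1 Y2 :
  rcoset_closed Y1 -> rcoset_closed Y2 -> rcoset_closed (Y1 :\: Y2).
Proof.
move=> clY1 clY2 y /setDP[Y1y Y2'y]; apply/subsetP => z zHy.
by rewrite inE (rcoset_closed_mem clY1 zHy) (rcoset_closed_mem clY2 zHy) Y1y Y2'y.
Qed.

Lemma rcoset_closedU Y1 Y2 :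
  rcoset_closed Y1 -> rcoset_closed Y2 -> rcoset_closed (Y1 :|: Y2).
Proof.
move=> clY1 clY2 y /setUP[/clY1 | /clY2] sHyY.
  by rewrite (subset_trans sHyY) ?subsetUl.
by rewrite (subset_trans sHyY) ?subsetUr.
Qed.

Lemma rcoset_closed_rcoset x : rcoset_closed (H :* x).
Proof. by move=> y Hxy; rewrite (rcoset_eqP Hxy). Qed.

Lemma rcoset_closed_disjoint Y y : rcoset_closed Y -> y \notin Y -> [disjoint H :* y & Y].
Proof.
move=> clY Y'y; apply/pred0P => z /=; apply/negP => /andP[zHy].
by rewrite (rcoset_closed_mem clY zHy) (negPf Y'y).
Qed.

Lemma rcoset_closed_sub_card Y k :
    rcoset_closed Y -> (k * #|H| <= #|Y|)%N ->
  exists2 Y1 : {set gT}, Y1 \subset Y & rcoset_closed Y1 /\ #|Y1| = (k * #|H|)%N.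
Proof.
move=> clY; elim: k => [_ | k IHk leY].
  by exists set0; rewrite ?sub0set ?cards0 //; split=> // y; rewrite inE.
have [Y1 sY1Y [clY1 cardY1]] := IHk (leq_trans (leq_mul (leqnSn k) (leqnn _)) leY).
have [y /setDP[Yy Y1'y]] : exists y, y \in Y :\: Y1.
  apply/set0Pn; rewrite -card_gt0 cardsDS // cardY1 subn_gt0 (leq_trans _ leY) //.
  by rewrite mulSn -[X in X < _]add0n ltn_add2r cardG_gt0.
exists (Y1 :|: H :* y); first by rewrite subUset sY1Y clY.
split; first exact: rcoset_closedU clY1 (@rcoset_closed_rcoset y).
have dY1Hy : [disjoint Y1 & H :* y] by rewrite disjoint_sym rcoset_closed_disjoint.
by rewrite cardsU (disjoint_setI0 dY1Hy) cards0 subn0 card_rcoset cardY1 mulSn addnC.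
Qed.

Lemma inv_transversal0 : inv_transversal set0 set0.
Proof. by split => [||y]; rewrite ?sub0set ?inE //; apply/setP => y; rewrite !inE. Qed.

Lemma inv_transversalU Y1 Y2 S1 S2 :
    rcoset_closed Y1 -> rcoset_closed Y2 -> [disjoint Y1 & Y2] ->
    inv_transversal Y1 S1 -> inv_transversal Y2 S2 ->
  inv_transversal (Y1 :|: Y2) (S1 :|: S2).
Proof.
have cardU (Ya Yb Sa Sb : {set gT}) :
    rcoset_closed Yb -> [disjoint Ya & Yb] -> Sb \subset Yb -> {in Ya, forall y, #|Sa :&: H :* y| = 1%N} ->
  {in Ya, forall y, #|(Sa :|: Sb) :&: H :* y| = 1%N}.
- move=> clYb dYab sSYb cardSa y Yay.
  suff Sb0 : Sb :&: H :* y = set0 by rewrite setIUl Sb0 setU0 cardSa.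
  apply/setP => z; rewrite !inE; apply/andP => -[/(subsetP sSYb) Ybz zHy].
  by rewrite (rcoset_closed_mem clYb zHy) (disjointFr dYab Yay) in Ybz.
move=> clY1 clY2 dY12 [sSY1 S1V cardS1] [sSY2 S2V cardS2].
split; [exact: setUSS | by rewrite invUg S1V S2V |].
move=> y /setUP[]; first exact: (cardU Y1 Y2 S1 S2).
by rewrite setUC; apply: (cardU Y2 Y1 S2 S1); rewrite // disjoint_sym.
Qed.

Lemma inv_transversal_pair s :
  (s^-1 \in H :* s -> s^-1 = s) ->
  inv_transversal (H :* s :|: H :* s^-1) [set s; s^-1].
Proof.
have pairI u : (u^-1 \in H :* u -> u^-1 = u) -> [set u; u^-1] :&: H :* u = [set u].
  move=> Vu; apply/setP => z; rewrite !inE.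
  have [-> | nzu] := eqVneq z u; first by rewrite rcoset_refl.
  by apply/negbTE/andP => -[/eqP zu' Hz]; rewrite zu' Vu -?zu' ?eqxx in nzu.
move=> Vs; split.
- by rewrite subUset !sub1set !inE !rcoset_refl orbT.
- by rewrite invUg !invg_set1 invgK setUC.
move=> y /setUP[] /rcoset_eqP ->; first by rewrite pairI ?cards1.
rewrite setUC -{2}[s]invgK pairI ?cards1 // invgK => /rcoset_eqP Hs.
by rewrite Vs // Hs rcoset_refl.
Qed.

Lemma inv_transversalI (K : {group gT}) Y S :
  H \subset K -> inv_transversal Y S -> inv_transversal (Y :&: K) (S :&: K).
Proof.
move=> sHK [sSY SV cardS]; split; first exact: setSI.
  by rewrite invIg SV invGid.
move=> y /setIP[Yy Ky]; have sHyK : H :* y \subset K by rewrite mul_subG ?sub1set.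
by rewrite -setIA (setIidPr sHyK) cardS.
Qed.

Lemma card_inv_transversal Y S : inv_transversal Y S -> #|S| = #|rcosets H Y|.
Proof.
case=> sSY _ cardSH; have memS s : s \in S -> S :&: H :* s = [set s].
  move=> Ss; have /eqP/cards1P[u defS] := cardSH s (subsetP sSY s Ss).
  by rewrite defS; congr [set _]; apply/esym/set1P; rewrite -defS inE Ss rcoset_refl.
rewrite -(card_in_imset (f := rcoset H)) => [|s1 s2 Ss1 Ss2 /= eqHs].
  apply: eq_card => C; apply/imsetP/rcosetsP => -[y Yy ->]; rewrite ?rcosetE.
    by exists y; rewrite ?(subsetP sSY).
  have /eqP/cards1P[s defS] := cardSH y Yy.
  have /setIP[Ss Hys] : s \in S :&: H :* y by rewrite defS set11.
  by exists s; rewrite // rcosetE (rcoset_eqP Hys).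
by apply/esym/set1P; rewrite -(memS s1 Ss1) inE Ss2 -rcosetE eqHs rcosetE rcoset_refl.
Qed.

Lemma rcosets_setD (K : {group gT}) :
  H \subset K -> rcosets H (K :\: H) = rcosets H K :\ gval H.
Proof.
move=> sHK; apply/setP => C; apply/rcosetsP/setD1P.
  case=> y /setDP[Ky H'y] ->.
  split; last by apply/rcosetsP; exists y.
  by apply: contraNneq H'y => Hy_eq; rewrite -Hy_eq rcoset_refl.
case=> HC /rcosetsP[y Ky defC]; exists y => //.
by rewrite inE Ky andbT; apply: contra HC => Hy; rewrite defC rcoset_id.
Qed.

Lemma double_cosetP y z :
  reflect (exists2 h, h \in H & exists2 k, k \in H & z = h * y * k) (z \in H :* y * H).
Proof.
apply: (iffP mulsgP) => [[u k /rcosetP[h Hh ->] Hk ->] | [h Hh [k Hk ->]]].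
  by exists h => //; exists k.
by exists (h * y) k; rewrite ?mem_rcoset ?mulgK.
Qed.

Lemma double_coset_refl y : y \in H :* y * H.
Proof. by rewrite (subsetP (mulG_subl _ _)) ?rcoset_refl. Qed.

Lemma double_coset_sym y z : z \in H :* y * H -> y \in H :* z * H.
Proof.
case/double_cosetP=> h Hh [k Hk ->]; apply/double_cosetP.
exists h^-1; first by rewrite groupV.
exists k^-1; first by rewrite groupV.
by rewrite !mulgA mulVg mul1g mulgK.
Qed.

Lemma double_coset_eq y z : z \in H :* y * H -> H :* z * H = H :* y * H.
Proof.
have sub u v : v \in H :* u * H -> H :* v * H \subset H :* u * H.
  case/double_cosetP=> h Hh [k Hk ->]; apply/subsetP => w /double_cosetP[a Ha [b Hb ->]].
  apply/double_cosetP; exists (a * h); first exact: groupM.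
  by exists (k * b); [exact: groupM | rewrite !mulgA].
by move=> zHyH; apply/eqP; rewrite eqEsubset sub // sub // double_coset_sym.
Qed.

Lemma double_cosetV y : (H :* y * H)^-1 = H :* y^-1 * H.
Proof.
apply/setP => z; rewrite mem_invg; apply/double_cosetP/double_cosetP => -[h Hh [k Hk]].
  move/(canRL invgK) => ->; exists k^-1; first by rewrite groupV.
  by exists h^-1; [rewrite groupV | rewrite !invMg mulgA].
move=> ->; exists k^-1; first by rewrite groupV.
by exists h^-1; [rewrite groupV | rewrite !invMg invgK mulgA].
Qed.

Lemma double_coset_sub_setD (G : {group gT}) y :
  H \subset G -> y \in G :\: H -> H :* y * H \subset G :\: H.
Proof.
move=> sHG /setDP[Gy H'y]; apply/subsetP => _ /double_cosetP[h Hh [k Hk ->]].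
have [Gh Gk] := (subsetP sHG h Hh, subsetP sHG k Hk).
by rewrite inE !(groupMr _ Hk) !(groupMl _ Hh) H'y !(groupMr _ Gk) !(groupMl _ Gh) Gy.
Qed.

Lemma rcoset_closed_double_coset y : rcoset_closed (H :* y * H).
Proof. by move=> z /double_coset_eq <-; apply: mulG_subl. Qed.

Lemma card_double_coset y : #|H :* y * H| = (#|H| * #|H : H :&: H :^ y|)%N.
Proof.
rewrite -(card_lcoset _ y^-1) mulgA -conjsgE.
apply/eqP; rewrite -(eqn_pmul2r (cardG_gt0 (H :&: H :^ y)%G)) -mulnA.
rewrite [(#|H : _| * _)%N]mulnC Lagrange ?subsetIl //.
by rewrite -{1}(cardJg H y) (mul_cardG (H :^ y)%G H) setIC.
Qed.

Lemma double_coset_inv_rcoset x y :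
  y^-1 \in H :* x * H -> exists2 s, s \in H :* x & s^-1 \in H :* y.
Proof.
case/mulsgP=> s k Hxs Hk defy'; exists s => //.
by rewrite mem_rcoset defy' mulKg.
Qed.

Lemma inv_transversal_matching Y1 Y2 :
    rcoset_closed Y1 -> rcoset_closed Y2 -> [disjoint Y1 & Y2] -> #|Y1| = #|Y2| ->
    {in Y1 & Y2, forall x y, y^-1 \in H :* x * H} ->
  exists S, inv_transversal (Y1 :|: Y2) S.
Proof.
have [n] := ubnP #|Y1|; elim: n Y1 Y2 => // n IHn Y1 Y2 ltY1n clY1 clY2 dY12 eqY12 matchY.
have [Y1_0 | [x Y1x]] := set_0Vmem Y1.
  have Y2_0 : Y2 = set0 by apply/eqP; rewrite -cards_eq0 -eqY12 Y1_0 cards0.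
  by exists set0; rewrite Y1_0 Y2_0 setU0; apply: inv_transversal0.
have Y1_gt0 : 0 < #|Y1| by apply/card_gt0P; exists x.
have /card_gt0P[y Y2y] : 0 < #|Y2| by rewrite -eqY12.
have [s Hxs Hys'] := double_coset_inv_rcoset (matchY x y Y1x Y2y).
have sHsY1 : H :* s \subset Y1 by rewrite (rcoset_eqP Hxs); apply: clY1.
have sHs'Y2 : H :* s^-1 \subset Y2 by rewrite (rcoset_eqP Hys'); apply: clY2.
set Y1' := Y1 :\: H :* s; set Y2' := Y2 :\: H :* s^-1.
have clY1' : rcoset_closed Y1' := rcoset_closedD clY1 (@rcoset_closed_rcoset s).
have clY2' : rcoset_closed Y2' := rcoset_closedD clY2 (@rcoset_closed_rcoset s^-1).
have [S' trS'] : exists S', inv_transversal (Y1' :|: Y2') S'.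
  apply: IHn => //.
  - rewrite cardsDS // card_rcoset -ltnS (leq_trans _ ltY1n) //.
    by rewrite ltnS ltn_subrL Y1_gt0 cardG_gt0.
  - by apply: disjointW dY12; apply: subsetDl.
  - by rewrite !cardsDS // !card_rcoset eqY12.
  by move=> u v /setDP[Y1u _] /setDP[Y2v _]; apply: matchY.
have dHs : [disjoint H :* s & H :* s^-1] := disjointW sHsY1 sHs'Y2 dY12.
have defY12 : Y1 :|: Y2 = (Y1' :|: Y2') :|: (H :* s :|: H :* s^-1).
  rewrite -{1}(setID Y1 (H :* s)) -{1}(setID Y2 (H :* s^-1)).
  by rewrite (setIidPr sHsY1) (setIidPr sHs'Y2) setUACA setUC.
exists (S' :|: [set s; s^-1]); rewrite defY12.
apply: inv_transversalU => //.
- exact: rcoset_closedU clY1' clY2'.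
- exact: rcoset_closedU (@rcoset_closed_rcoset s) (@rcoset_closed_rcoset s^-1).
- rewrite -setI_eq0 setIUl !setIUr !setU_eq0 !setI_eq0 !disjoint_setDl /= andbT.
  apply/andP; split; first exact: disjointW (subsetDl _ _) sHs'Y2 dY12.
  by rewrite disjoint_sym in dY12; apply: disjointW (subsetDl _ _) sHsY1 dY12.
apply: inv_transversal_pair => Hss'.
by have := disjointFr dHs Hss'; rewrite rcoset_refl.
Qed.

Lemma inv_transversal_self_paired Y k :
    rcoset_closed Y -> #|Y| = (k.*2 * #|H|)%N ->
    {in Y &, forall x y, y^-1 \in H :* x * H} ->
  exists S, inv_transversal Y S.
Proof.
move=> clY cardY matchY.
have [|Y1 sY1Y [clY1 cardY1]] := rcoset_closed_sub_card (k := k) clY.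
  by rewrite cardY leq_mul2r -addnn leq_addr orbT.
rewrite -(setID Y Y1) (setIidPr sY1Y).
apply: inv_transversal_matching => //.
- exact: rcoset_closedD clY clY1.
- by rewrite disjoint_sym disjoint_setDl.
- by rewrite cardsDS // cardY cardY1 -addnn mulnDl addnK.
by move=> x y /(subsetP sY1Y) Yx /setDP[Yy _]; apply: matchY.
Qed.

Lemma inv_transversal_double_coset g :
    (g^-1 \in H :* g * H -> odd #|H : H :&: H :^ g| ->
       exists2 t, t \in H :* g * H & t^-1 = t) ->
  exists S, inv_transversal (H :* g * H :|: H :* g^-1 * H) S.
Proof.
move=> oddD; set D := H :* g * H.
have clD : rcoset_closed D := @rcoset_closed_double_coset g.
have [Dg' | D'g'] := boolP (g^-1 \in D); last first.
  apply: inv_transversal_matching => //.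
  - exact: rcoset_closed_double_coset.
  - apply/pred0P => z /=; apply/negP => /andP[Dz D'z]; case/negP: D'g'.
    by rewrite /D -(double_coset_eq Dz) (double_coset_eq D'z) double_coset_refl.
  - by rewrite -double_cosetV card_invg.
  by move=> x y Dx D'y; rewrite (double_coset_eq Dx) -mem_invg double_cosetV.
have D'D : H :* g^-1 * H = D := double_coset_eq Dg'.
have matchD : {in D &, forall x y, y^-1 \in H :* x * H}.
  by move=> x y Dx Dy; rewrite (double_coset_eq Dx) -mem_invg double_cosetV D'D; exact: Dy.
rewrite D'D setUid; have := card_double_coset g; rewrite -/D.
set m := #|H : _|; have [m_odd cardD | m_even cardD] := boolP (odd m); last first.
  apply: (inv_transversal_self_paired (k := m./2)) clD _ matchD.
  by rewrite even_halfK // mulnC.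
(* An odd number of right cosets cannot be paired off among themselves: the coset of an
   involution t is paired with itself. *)
have [t Dt tV] := oddD Dg' m_odd.
have sHtD : H :* t \subset D := clD t Dt.
have [S trS] : exists S, inv_transversal (D :\: H :* t) S.
  apply: (inv_transversal_self_paired (k := m./2)).
  - exact: rcoset_closedD clD (@rcoset_closed_rcoset t).
  - by rewrite cardsDS // cardD card_rcoset odd_halfK // -subn1 mulnBl mul1n mulnC.
  by move=> x y /setDP[Dx _] /setDP[Dy _]; apply: matchD.
have defD : D = (D :\: H :* t) :|: (H :* t :|: H :* t^-1).
  by rewrite tV setUid setUC -{1}(setIidPr sHtD) setID.
exists (S :|: [set t; t^-1]); rewrite {1}defD.
apply: inv_transversalU trS _.
- exact: rcoset_closedD clD (@rcoset_closed_rcoset t).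
- by rewrite tV setUid; apply: rcoset_closed_rcoset.
- by rewrite tV setUid disjoint_setDl.
by apply: inv_transversal_pair; rewrite tV.
Qed.

Lemma inv_transversal_exists Y :
    {in Y, forall y, H :* y * H \subset Y} -> Y^-1 = Y ->
    {in Y, forall g, g^-1 \in H :* g * H -> odd #|H : H :&: H :^ g| ->
       exists2 t, t \in H :* g * H & t^-1 = t} ->
  exists S, inv_transversal Y S.
Proof.
have [n] := ubnP #|Y|; elim: n Y => // n IHn Y ltYn clY YV oddY.
have [-> | [g Yg]] := set_0Vmem Y; first by exists set0; apply: inv_transversal0.
set E := H :* g * H :|: H :* g^-1 * H.
have Eg : g \in E by rewrite inE double_coset_refl.
have sEY : E \subset Y by rewrite subUset !clY // -mem_invg YV.
have clE : rcoset_closed E.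
  exact: rcoset_closedU (@rcoset_closed_double_coset g) (@rcoset_closed_double_coset g^-1).
have memE y z : z \in H :* y * H -> z \in E -> y \in E.
  move=> /double_coset_sym yHzH /setUP[] /double_coset_eq eqHz.
    by rewrite inE -eqHz yHzH.
  by rewrite inE -eqHz yHzH orbT.
have [S1 trS1] := inv_transversal_double_coset (oddY g Yg).
have [S2 trS2] : exists S2, inv_transversal (Y :\: E) S2.
  apply: IHn.
  - rewrite cardsDS // -ltnS (leq_trans _ ltYn) // ltnS ltn_subrL.
    by apply/andP; split; apply/card_gt0P; exists g.
  - move=> y /setDP[Yy E'y]; apply/subsetP => z HyHz.
    by rewrite inE (subsetP (clY y Yy)) // andbT; apply: contra E'y; apply: memE.
  - by rewrite invDg YV invUg !double_cosetV invgK setUC.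
  by move=> y /setDP[Yy _]; apply: oddY.
exists (S1 :|: S2); rewrite -(setID Y E) (setIidPr sEY).
apply: inv_transversalU trS1 trS2 => //; last by rewrite disjoint_sym disjoint_setDl.
apply: rcoset_closedD clE => // y Yy; apply: subset_trans (clY y Yy); exact: mulG_subl.
Qed.

End InverseClosedTransversal.

Lemma gen_quaternion_facts (gT : finGroupType) (H : {group gT}) :
  gen_quaternion H -> [/\ 2.-group H, H :!=: 1, #|'Ohm_1(H)| = 2%N & ~~ cyclic H].
Proof.
case=> n n_gt2 isoH; have oH : #|H| = (2 ^ n)%N by rewrite (card_isog isoH) card_quaternion.
have pH : 2.-group H by rewrite /pgroup oH pnatX.
have ntH : H :!=: 1 by rewrite -cardG_gt1 oH (leq_trans (_ : 1 < 2 ^ 3)) // leq_exp2l.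
have Q_H : extremal_class H = Quaternion by apply/quaternion_classP; exists n.
split=> //; first by apply/(prime_Ohm1P pH ntH); rewrite Q_H eqxx orbT.
apply/negP => /cyclic_abelian/center_idP cH.
have [[x y] genH _] := generators_quaternion n_gt2 isoH.
have [_ _ [_ oZ _ _ _] _ _] := quaternion_structure n_gt2 genH isoH.
move: oZ; rewrite cH oH => /eqP; rewrite (eqn_exp2l n 1) // => /eqP n1.
by rewrite n1 in n_gt2.
Qed.

Lemma gen_quaternion_involution_sub (gT : finGroupType) (H K : {group gT}) t :
  H \subset K -> gen_quaternion H -> gen_quaternion K -> t \in K -> t^-1 = t -> t \in H.
Proof.
move=> sHK gqH gqK Kt tV.
have [pK _ oK1 _] := gen_quaternion_facts gqK; have [_ _ oH1 _] := gen_quaternion_facts gqH.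
have eqOhm : 'Ohm_1(H) = 'Ohm_1(K) by apply/eqP; rewrite eqEcard OhmS // oH1 oK1.
apply: (subsetP (Ohm_sub 1 H)).
by rewrite eqOhm (OhmE 1 pK) mem_gen // !inE Kt expg2_eq1 tV /=.
Qed.

Lemma inv_transversal_gen_quaternion_maximal (gT : finGroupType) (G H K : {group gT}) S :
    H \subset K -> K \subset G -> gen_quaternion H -> gen_quaternion K ->
    inv_transversal H (G :\: H) S ->
  K :=: H.
Proof.
move=> sHK sKG gqH gqK trS; apply/eqP; rewrite eqEsubset sHK andbT; apply: contraT => nsKH.
have trSK : inv_transversal H (K :\: H) (S :&: K).
  by have := inv_transversalI sHK trS; rewrite setIDAC (setIidPr sKG).
have [sSK SKV _] := trSK.
have SK_even : ~~ odd #|S :&: K|.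
  apply: (even_card_invg_closed SKV) => t SKt; apply/eqP => tV.
  have /setDP[Kt H't] := subsetP sSK t SKt.
  by rewrite (gen_quaternion_involution_sub sHK gqH gqK Kt tV) in H't.
have [pK _ _ _] := gen_quaternion_facts gqK.
have [k idxKH] := p_natP (pnat_dvd (dvdn_indexg K H) pK).
have H_KH : gval H \in rcosets H K by apply/rcosetsP; exists 1; rewrite ?rcoset1.
have cardKH' : #|rcosets H K :\ gval H| = (#|K : H| - 1)%N.
  by rewrite /indexg (cardsD1 (gval H) (rcosets H K)) H_KH add1n subn1.
have : 1 < #|K : H| by rewrite indexg_gt1.
move: SK_even; rewrite (card_inv_transversal trSK) rcosets_setD // cardKH' idxKH.
by case: k {idxKH} => // k; rewrite oddB ?expn_gt0 // oddX.
Qed.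

Lemma norm_joing_cycle (gT : finGroupType) (H : {group gT}) g :
  g \in 'N(H) -> g ^+ 2 \in H -> H <*> <[g]> = H :|: H :* g.
Proof.
move=> nHg g2H; apply/eqP; rewrite eqEsubset; apply/andP; split; last first.
  rewrite subUset joing_subl mul_subG ?joing_subl // sub1set.
  exact: subsetP (joing_subr H <[g]>) g (cycle_id g).
rewrite norm_joinEr ?cycle_subG //; apply/subsetP => _ /mulsgP[h _ Hh /cycleP[i ->] ->].
rewrite -(odd_double_half i) addnC expgD -mul2n expgM mulgA inE.
case: (odd i); rewrite ?expg1 ?expg0 ?mulg1.
  by apply/orP; right; rewrite mem_rcoset mulgK (groupM Hh (groupX _ g2H)).
by apply/orP; left; rewrite (groupM Hh (groupX _ g2H)).
Qed.

Lemma max_gen_quaternion_coset_involution (gT : finGroupType) (G H : {group gT}) g :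
    max_gen_quaternion G H -> g \in G :\: H -> g \in 'N(H) -> g ^+ 2 \in H ->
  exists2 t, t \in H :* g & t^-1 = t.
Proof.
move=> [sHG gqH maxH] /setDP[Gg H'g] nHg g2H.
have [/exists_inP[t Hgt /eqP tV] | noinv] := boolP [exists t in H :* g, t^-1 == t].
  by exists t.
have [pH ntH oH1 ncH] := gen_quaternion_facts gqH.
set K := (H <*> <[g]>)%G; have defK : K :=: H :|: H :* g := norm_joing_cycle nHg g2H.
have sHK : H \subset K := joing_subl _ _.
have pK : 2.-group K.
  rewrite /K /= norm_joinEr ?cycle_subG // pgroupM pH /= /pgroup -orderE.
  apply: (@pnat_dvd _ (2 * #|H|)); last by rewrite pnatM pnat_id.
  by rewrite order_dvdn expgM -order_dvdn order_dvdG.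
have oK1 : #|'Ohm_1(K)| = 2%N.
  rewrite -oH1 (OhmE 1 pK) (OhmE 1 pH); congr #|<<_>>|; apply/setP => x.
  rewrite !inE defK !inE expg2_eq1; case: (boolP (x \in H)) => //= H'x.
  by apply/negbTE/andP => -[Hgx xV]; case/exists_inP: noinv; exists x.
have := introT (prime_Ohm1P pK (subG1_contra sHK ntH)) oK1.
case/orP => [/(cyclicS sHK) cH | /andP[_ /eqP /quaternion_classP gqK]].
  by rewrite cH in ncH.
have sKG : K \subset G by rewrite join_subG sHG cycle_subG.
have KH : K = H := maxH K sKG gqK sHK.
by case/negP: H'g; rewrite -KH (subsetP (joing_subr _ _)) ?cycle_id.
Qed.

Lemma max_gen_quaternion_double_coset_involution (gT : finGroupType) (G H : {group gT}) g :
    max_gen_quaternion G H -> g \in G :\: H ->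
    g^-1 \in H :* g * H -> odd #|H : H :&: H :^ g| ->
  exists2 t, t \in H :* g * H & t^-1 = t.
Proof.
move=> maxH G'Hg g'HgH odd_idx; have [_ gqH _] := maxH.
have [pH _ _ _] := gen_quaternion_facts gqH.
have [k idx] := p_natP (pnat_dvd (dvdn_indexg H (H :&: H :^ g)%G) pH).
have nHg : g \in 'N(H).
  case: k idx odd_idx => [/eqP | k ->]; last by rewrite oddX.
  rewrite indexg_eq1 subsetI subxx /= => sHHg _.
  by apply/normP/esym/eqP; rewrite eqEcard sHHg cardJg leqnn.
have HgH : H :* g * H = H :* g by rewrite norm_rlcoset // -mulgA mulGid.
rewrite HgH in g'HgH *; apply: max_gen_quaternion_coset_involution maxH G'Hg nHg _.
by rewrite -groupV expgS expg1 invMg -mem_rcoset.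
Qed.

Lemma card_cayley_adj (gT : finGroupType) (H : {group gT}) (S : {set gT}) g :
  #|[set c in H | cayley_adj S g c]| = #|S :&: H :* g^-1|.
Proof.
rewrite -[RHS](card_rcoset _ g); apply: eq_card => z.
by rewrite mem_rcoset !inE /cayley_adj mem_rcoset invgK mulgKV andbC.
Qed.

Lemma subgroup_perfect_codeP (gT : finGroupType) (G H : {group gT}) :
  H \subset G -> subgroup_perfect_code G H <-> exists S, inv_transversal H (G :\: H) S.
Proof.
move=> sHG; split=> [[S [sSG SV [_ indepH cardS]]] | [S [sSGH SV cardS]]].
  have H'S s : s \in S -> s \notin H.
    move=> Ss; apply/negP => Hs; have /setD1P[s1 _] := subsetP sSG s Ss.
    have := indepH 1 s (group1 H) Hs; rewrite eq_sym s1 /cayley_adj invg1 mulg1 Ss.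
    by move=> /(_ isT).
  exists S; split=> //.
    by apply/subsetP => s Ss; have /setD1P[_ Gs] := subsetP sSG s Ss; rewrite inE H'S.
  by move=> y /setDP[Gy H'y]; rewrite -[y]invgK -card_cayley_adj cardS ?inE ?groupV ?H'y.
exists S; split=> //.
  apply/subsetP => s /(subsetP sSGH) /setDP[Gs H's]; rewrite !inE Gs andbT.
  by apply: contraNneq H's => ->.
split=> // [c1 c2 Hc1 Hc2 _ | g Gg H'g]; last first.
  by rewrite card_cayley_adj cardS // inE groupV H'g groupV.
by apply/negP => /(subsetP sSGH) /setDP[_]; rewrite groupM ?groupV.
Qed.

Theorem lemma3p3 (gT : finGroupType) (G H : {group gT}) :
  H \subset G -> gen_quaternion H ->
  (subgroup_perfect_code G H <-> max_gen_quaternion G H).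
Proof.
move=> sHG gqH; apply: iff_trans (subgroup_perfect_codeP sHG) _; split.
  case=> S trS; split=> // K sKG gqK sHK; apply: val_inj.
  exact: inv_transversal_gen_quaternion_maximal sHK sKG gqH gqK trS.
move=> maxH; apply: inv_transversal_exists => [y | | g].
- exact: double_coset_sub_setD.
- by rewrite invDg !invGid.
exact: max_gen_quaternion_double_coset_involution.
Qed.
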